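(* Let $\mathcal C=\mathcal C(I,A,(\rho_i)_{i\in I},(C^a)_{a\in A})$ be a connected Cartan scheme and $\mathcal R=\mathcal R(\mathcal C,(R^a)_{a\in A})$ a finite root system of type $\mathcal C$. Let $a,b\in A$ and $i,j,l\in I$ such that $i\neq j$, $\rho_i(a)=\rho_j(a)=b\neq a$, and $\rho_l(a)=a$. Then: (1) $c^a_{ij}c^a_{il}c^a_{jl}=0$; (2) if $\rho_i\rho_l(b)\neq\rho_l(b)$ and $\rho_j\rho_l(b)\neq\rho_l(b)$, then $c^a_{ln}=c^b_{ln}$ for all $n\in I$.
   Context: Let $I$ be a nonempty finite set and $\{\alpha_i\mid i\in I\}$ the standard basis of $\mathbb Z^I$; $\mathbb N_0=\{0,1,2,\dots\}$. A generalized Cartan matrix is $C=(c_{ij})_{i,j\in I}\in\mathbb Z^{I\times I}$ with $c_{ii}=2$, $c_{jk}\le0$ for $j\ne k$, and $c_{ij}=0\Rightarrow c_{ji}=0$. A Cartan scheme $\mathcal C=\mathcal C(I,A,(\rho_i)_{i\in I},(C^a)_{a\in A})$ consists of a nonempty set $A$, maps $\rho_i:A\to A$ and generalized Cartan matrices $C^a=(c^a_{jk})_{j,k\in I}$ such that (C1) $\rho_i^2=\mathrm{id}$ and (C2) $c^a_{ij}=c^{\rho_i(a)}_{ij}$ for all $a\in A$, $i,j\in I$. It is connected if the group generated by the $\rho_i$ acts transitively on $A$. For $i\in I$, $a\in A$ let $\sigma_i^a\in\mathrm{Aut}(\mathbb Z^I)$, $\sigma_i^a(\alpha_j)=\alpha_j-c^a_{ij}\alpha_i$.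 A root system of type $\mathcal C$ is a family $\mathcal R=\mathcal R(\mathcal C,(R^a)_{a\in A})$ of subsets $R^a\subset\mathbb Z^I$ such that, writing $R^a_+=R^a\cap\mathbb N_0^I$ and $m^a_{i,j}=|R^a\cap(\mathbb N_0\alpha_i+\mathbb N_0\alpha_j)|$, for all $a\in A$, $i,j\in I$: (R1) $R^a=R^a_+\cup(-R^a_+)$; (R2) $R^a\cap\mathbb Z\alpha_i=\{\alpha_i,-\alpha_i\}$; (R3) $\sigma_i^a(R^a)=R^{\rho_i(a)}$; (R4) if $i\neq j$ and $m^a_{i,j}$ is finite then $(\rho_i\rho_j)^{m^a_{i,j}}(a)=a$. It is finite if every $R^a$ is finite. *)

From HB Require Import structures.
From mathcomp Require Import all_boot all_order all_algebra.
Set Implicit Arguments. Unset Strict Implicit. Unset Printing Implicit Defensive.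
Import Order.TTheory GRing.Theory Num.Theory.
Local Open Scope ring_scope.

Definition vecZ (I : finType) := {ffun I -> int}.

Definition alpha (I : finType) (i : I) : vecZ I := [ffun k => ((k == i) : nat)%:Z].

Definition gcm (I : finType) (c : I -> I -> int) : Prop :=
  (forall i, c i i = 2) /\
  (forall j k, j != k -> c j k <= 0) /\
  (forall i j, c i j = 0 -> c j i = 0).

Definition cartan_scheme (I : finType) (A : Type)
    (rho : I -> A -> A) (C : A -> I -> I -> int) : Prop :=
  (0 < #|I|)%N /\ (exists a : A, True) /\
  (forall a, gcm (C a)) /\
  (forall i a, rho i (rho i a) = a) /\
  (forall a i j, C a i j = C (rho i a) i j).

(* connected: the group generated by the rho_i acts transitively on A
   (since the rho_i are involutions, words in the rho_i suffice) *)
Definition connected_scheme (I : finType) (A : Type) (rho : I -> A -> A) : Prop :=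
  forall a b : A, exists w : seq I, foldr (fun i x => rho i x) a w = b.

(* sigma_i^a : alpha_j |-> alpha_j - c^a_ij alpha_i, extended linearly *)
Definition sigma (I : finType) (A : Type) (C : A -> I -> I -> int)
    (i : I) (a : A) (v : vecZ I) : vecZ I :=
  [ffun k => v k - (\sum_(j : I) C a i j * v j) * alpha i k].

Definition nonneg_vec (I : finType) (v : vecZ I) : Prop := forall k, 0 <= v k.

Definition neg_vec (I : finType) (v : vecZ I) : vecZ I := [ffun k => - v k].

Definition has_card (I : finType) (P : vecZ I -> Prop) (m : nat) : Prop :=
  exists s : seq (vecZ I), uniq s /\ size s = m /\ (forall x, x \in s <-> P x).

Definition finite_set (I : finType) (P : vecZ I -> Prop) : Prop :=
  exists s : seq (vecZ I), forall x, P x <-> x \in s.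

Definition in_cone2 (I : finType) (i j : I) (x : vecZ I) : Prop :=
  exists p q : nat, x = [ffun k => p%:Z * alpha i k + q%:Z * alpha j k].

Definition root_system (I : finType) (A : Type)
    (rho : I -> A -> A) (C : A -> I -> I -> int) (R : A -> vecZ I -> Prop) : Prop :=
  (forall a x, R a x <-> ((R a x /\ nonneg_vec x) \/
                          (R a (neg_vec x) /\ nonneg_vec (neg_vec x)))) /\
  (forall a i x, (R a x /\ exists k : int, x = [ffun t => k * alpha i t]) <->
                 (x = alpha i \/ x = neg_vec (alpha i))) /\
  (forall a i y, R (rho i a) y <-> exists x, R a x /\ y = sigma C i a x) /\
  (forall a i j m, i != j ->
     has_card (fun x => R a x /\ in_cone2 i j x) m ->
     iter m (fun x => rho i (rho j x)) a = a).

Definition finite_root_system (I : finType) (A : Type) (R : A -> vecZ I -> Prop) : Prop :=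
  forall a, finite_set (R a).

From mathcomp Require Import all_boot all_order all_algebra.
From mathcomp Require Import ring zify.
Set Implicit Arguments. Unset Strict Implicit. Unset Printing Implicit Defensive.
Import Order.TTheory GRing.Theory Num.Theory.
Local Open Scope ring_scope.

(* The reflections sigma_l^a : R^a -> R^a, sigma_i^a : R^a -> R^b and sigma_j^b : R^b -> R^a
   compose to a permutation of the finite set R^a.  If c^a_ij, c^a_il, c^a_jl are all nonzero,
   or if c^a_ij = 0 and c^a_il c^a_li + c^a_jl c^a_lj >= 4, iterating it on -alpha_l produces
   roots whose alpha_l-coefficient grows forever.  This gives (1), and in (2) it leaves, for
   k = i or k = j, either c^a_kl = 0 or c^a_kl = c^a_lk = -1.  In the second case the roots
   of R^a in N alpha_k + N alpha_l are alpha_k, alpha_l, alpha_k + alpha_l, so (R4) gives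
   (rho_k rho_l)^3 a = a, i.e. rho_k rho_l b = rho_l b, which is excluded.  In the first case
   (R4) with m = 2 gives rho_l b = b; then sigma_k^b sigma_l^b sigma_k^a sigma_l^a adds
   (c^a_ln - c^b_ln) alpha_l to alpha_n, and finiteness forces c^a_ln = c^b_ln. *)

Section Reflections.
Variables (I : finType) (A : Type) (C : A -> I -> I -> int).

Lemma alphaE (i k : I) : alpha i k = (k == i)%:R.
Proof. by rewrite ffunE; case: (k == i). Qed.

Lemma sum_mul_alpha (F : I -> int) (m : I) (c : int) :
  \sum_t F t * (c * alpha m t) = c * F m.
Proof.
rewrite (bigD1 m) //= big1 ?addr0; first by rewrite alphaE eqxx mulr1 mulrC.
by move=> t /negbTE htm; rewrite alphaE htm !mulr0.
Qed.

Definition cartan_form (a : A) (k : I) (v : vecZ I) : int := \sum_t C a k t * v t.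

Lemma sigmaE k a v t : sigma C k a v t = v t - cartan_form a k v * alpha k t.
Proof. by rewrite ffunE. Qed.

Lemma cartan_form_sigma b m k a v :
  cartan_form b m (sigma C k a v) = cartan_form b m v - cartan_form a k v * C b m k.
Proof.
rewrite /cartan_form; under eq_bigr => t _ do rewrite sigmaE mulrBr.
by rewrite sumrB sum_mul_alpha.
Qed.

Definition comb2 (i l : I) (p q : int) : vecZ I :=
  [ffun t => p * alpha i t + q * alpha l t].

Definition comb3 (i j l : I) (x y z : int) : vecZ I :=
  [ffun t => x * alpha i t + y * alpha j t + z * alpha l t].

Lemma cartan_form_comb2 a k i l p q :
  cartan_form a k (comb2 i l p q) = p * C a k i + q * C a k l.
Proof.
rewrite /cartan_form; under eq_bigr => t _ do rewrite ffunE mulrDr.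
by rewrite big_split /= !sum_mul_alpha.
Qed.

Lemma cartan_form_comb3 a k i j l x y z :
  cartan_form a k (comb3 i j l x y z) = x * C a k i + y * C a k j + z * C a k l.
Proof.
rewrite /cartan_form; under eq_bigr => t _ do rewrite ffunE !mulrDr.
by rewrite !big_split /= !sum_mul_alpha.
Qed.

Lemma sigma_comb2_1 a i l p q :
  sigma C i a (comb2 i l p q) = comb2 i l (p - (p * C a i i + q * C a i l)) q.
Proof. by apply/ffunP => t; rewrite sigmaE cartan_form_comb2 !ffunE; ring. Qed.

Lemma sigma_comb2_2 a i l p q :
  sigma C l a (comb2 i l p q) = comb2 i l p (q - (p * C a l i + q * C a l l)).
Proof. by apply/ffunP => t; rewrite sigmaE cartan_form_comb2 !ffunE; ring. Qed.

Lemma sigma_comb3_1 a i j l x y z :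
  sigma C i a (comb3 i j l x y z) =
  comb3 i j l (x - (x * C a i i + y * C a i j + z * C a i l)) y z.
Proof. by apply/ffunP => t; rewrite sigmaE cartan_form_comb3 !ffunE; ring. Qed.

Lemma sigma_comb3_2 a i j l x y z :
  sigma C j a (comb3 i j l x y z) =
  comb3 i j l x (y - (x * C a j i + y * C a j j + z * C a j l)) z.
Proof. by apply/ffunP => t; rewrite sigmaE cartan_form_comb3 !ffunE; ring. Qed.

Lemma sigma_comb3_3 a i j l x y z :
  sigma C l a (comb3 i j l x y z) =
  comb3 i j l x y (z - (x * C a l i + y * C a l j + z * C a l l)).
Proof. by apply/ffunP => t; rewrite sigmaE cartan_form_comb3 !ffunE; ring. Qed.

End Reflections.

Section Coordinates.
Variables (I : finType) (i l : I).

Lemma comb2_1 p q : l != i -> comb2 i l p q i = p.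
Proof. by move=> /negbTE h; rewrite !ffunE eq_sym h eqxx /=; ring. Qed.

Lemma comb2_2 p q : l != i -> comb2 i l p q l = q.
Proof. by move=> /negbTE h; rewrite !ffunE h eqxx /=; ring. Qed.

Lemma comb2_inj p q p' q' : l != i -> comb2 i l p q = comb2 i l p' q' -> p = p' /\ q = q'.
Proof.
move=> h e; split; first by rewrite -(comb2_1 p q h) e comb2_1.
by rewrite -(comb2_2 p q h) e comb2_2.
Qed.

Lemma comb2_0p q : comb2 i l 0 q = [ffun t => q * alpha l t].
Proof. by apply/ffunP => t; rewrite !ffunE; ring. Qed.

Lemma comb2_p0 p : comb2 i l p 0 = [ffun t => p * alpha i t].
Proof. by apply/ffunP => t; rewrite !ffunE; ring. Qed.

Lemma comb2_10 : comb2 i l 1 0 = alpha i.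
Proof. by apply/ffunP => t; rewrite !ffunE; ring. Qed.

Lemma comb2_01 : comb2 i l 0 1 = alpha l.
Proof. by apply/ffunP => t; rewrite !ffunE; ring. Qed.

Lemma comb3_3 (j : I) x y z : l != i -> l != j -> comb3 i j l x y z l = z.
Proof. by move=> /negbTE h1 /negbTE h2; rewrite !ffunE h1 h2 eqxx /=; ring. Qed.

Lemma comb3_00N1 (j : I) : comb3 i j l 0 0 (-1) = neg_vec (alpha l).
Proof. by apply/ffunP => t; rewrite !ffunE; ring. Qed.

End Coordinates.

Section RootSystem.
Variables (I : finType) (A : Type) (rho : I -> A -> A).
Variables (C : A -> I -> I -> int) (R : A -> vecZ I -> Prop).
Hypotheses (hC : cartan_scheme rho C) (hR : root_system rho C R).
Hypothesis hfin : finite_root_system R.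

Lemma rhoK i : involutive (rho i).
Proof. by case: hC => _ [_ [_ [h _]]] x; apply: h. Qed.

Lemma cartan_rho i a k : C (rho i a) i k = C a i k.
Proof. by case: hC => _ [_ [_ [_ h]]]; rewrite -h. Qed.

Lemma cartan_diag a u : C a u u = 2.
Proof. by case: hC => _ [_ [h _]]; case: (h a). Qed.

Lemma cartan_eq0_sym a u v : (C a u v == 0) = (C a v u == 0).
Proof.
by case: hC => _ [_ [h _]]; case: (h a) => _ [_ hs]; apply/eqP/eqP => /hs.
Qed.

Lemma cartan_neq0_le a u v : u != v -> C a u v != 0 -> C a u v <= -1 /\ C a v u <= -1.
Proof.
case: hC => _ [_ [h _]]; case: (h a) => _ [hle _] huv cuv.
have cvu : C a v u != 0 by rewrite -cartan_eq0_sym.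
by have := hle _ _ huv; have := hle v u; rewrite eq_sym huv => /(_ isT); lia.
Qed.

Lemma root_sigma a k v : R a v -> R (rho k a) (sigma C k a v).
Proof. by case: hR => _ [_ [h3 _]] Rv; apply/h3; exists v. Qed.

Lemma root_alpha a k : R a (alpha k).
Proof. by case: hR => _ [h2 _]; have [] := proj2 (h2 a k (alpha k)) (or_introl erefl). Qed.

Lemma root_neg a v : R a v -> R a (neg_vec v).
Proof.
case: hR => [h1 _] Rv.
have vNN : neg_vec (neg_vec v) = v by apply/ffunP => t; rewrite !ffunE opprK.
by case: (proj1 (h1 a v) Rv) => [[_ h]|[h _]] //; apply/h1; right; rewrite vNN.
Qed.

Lemma root_sign a v : R a v -> (forall k, 0 <= v k) \/ (forall k, v k <= 0).
Proof.
case: hR => [h1 _] Rv; case: (proj1 (h1 a v) Rv) => [[_ h]|[_ h]]; [left|right] => k //.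
by have := h k; rewrite ffunE oppr_ge0.
Qed.

Lemma root_scaled_alpha a k c : R a [ffun t => c * alpha k t] -> c = 1 \/ c = -1.
Proof.
case: hR => _ [h2 _] Rv.
by have [] := proj1 (h2 a k _) (conj Rv (ex_intro _ c erefl)) => /ffunP /(_ k);
  rewrite !ffunE eqxx /= mulr1 => ->; [left|right].
Qed.

Lemma rho_braid a k l m : k != l -> has_card (fun x => R a x /\ in_cone2 k l x) m ->
  iter m (fun x => rho k (rho l x)) a = a.
Proof. by case: hR => _ [_ [_ h4]]; apply: h4. Qed.

Lemma root_seq_not_injective a (f : nat -> vecZ I) :
  (forall n, R a (f n)) -> ~ injective f.
Proof.
move=> Rf finj; case: (hfin a) => s hs.
have uniq_f : uniq (map f (iota 0 (size s).+1)) by rewrite map_inj_uniq // iota_uniq.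
have sub_f : {subset map f (iota 0 (size s).+1) <= s} by move=> y /mapP [n _ ->]; apply/hs.
by have := uniq_leq_size uniq_f sub_f; rewrite size_map size_iota ltnn.
Qed.

Lemma root_orbit_bounded a (g : vecZ I -> vecZ I) k (P : vecZ I -> Prop) v :
  (forall w, R a w -> R a (g w)) -> (forall w, P w -> P (g w) /\ w k < g w k) ->
  R a v -> ~ P v.
Proof.
move=> Rg Pg Rv Pv; pose f n := iter n g v.
have Pf n : P (f n) by elim: n => //= n /Pg [].
have Rf n : R a (f n) by elim: n => //= n /Rg.
have f_lt : {homo (fun n => f n k) : m n / (m < n)%N >-> m < n}.
  by apply: homo_ltn => [??? /lt_trans|n]; [apply|apply: (proj2 (Pg _ (Pf n)))].
apply: (root_seq_not_injective Rf) => m n e.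
by case: (ltngtP m n) => // /f_lt; rewrite e ltxx.
Qed.

Lemma root_comb2_sign a k l p q : l != k -> R a (comb2 k l p q) -> 0 <= p * q.
Proof.
move=> hlk /root_sign [] h; have := h k; have := h l;
  rewrite comb2_1 // comb2_2 //; nia.
Qed.

Lemma root_comb2_axis a k l (p q : nat) : R a (comb2 k l p q) ->
  (p = 0 -> q = 1)%N /\ (q = 0 -> p = 1)%N.
Proof.
move=> Rv; split => e; move: Rv; rewrite e ?comb2_0p ?comb2_p0;
  by case/root_scaled_alpha; lia.
Qed.

Lemma cone2_card a k l (s : seq (nat * nat)) : l != k -> uniq [:: (1, 0), (0, 1) & s]%N ->
  (forall pq, pq \in s -> R a (comb2 k l pq.1 pq.2)) ->
  (forall p q : nat, (0 < p)%N -> (0 < q)%N -> R a (comb2 k l p q) -> (p, q) \in s) ->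
  has_card (fun x => R a x /\ in_cone2 k l x) (size s).+2.
Proof.
move=> hlk us Rs sR.
exists (map (fun pq : nat * nat => comb2 k l pq.1 pq.2) [:: (1, 0), (0, 1) & s]%N).
split.
  rewrite map_inj_uniq // => [[p q] [p' q']] /(comb2_inj hlk) /= [].
  by move=> /eqP; rewrite eqz_nat => /eqP -> /eqP; rewrite eqz_nat => /eqP ->.
split=> [|x]; first by rewrite size_map.
split=> [/mapP [pq pq_s ->]|[Rx [p [q ex]]]].
  split; last by exists pq.1, pq.2.
  move: pq_s; rewrite !inE => /orP [/eqP ->|/orP [/eqP ->|/Rs //]].
    by rewrite comb2_10; apply: root_alpha.
  by rewrite comb2_01; apply: root_alpha.
apply/mapP; exists (p, q) => //; rewrite ex -/(comb2 k l p q) in Rx.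
have [ax1 ax2] := root_comb2_axis Rx.
case: (posnP p) => [p0|p_gt0]; first by rewrite p0 ax1 // !inE eqxx orbT.
case: (posnP q) => [q0|q_gt0]; first by rewrite q0 ax2 // !inE eqxx.
by rewrite !inE sR ?orbT.
Qed.

Section RankTwo.
Variables (a b : A) (k l : I).
Hypotheses (hka : rho k a = b) (hba : b <> a) (hla : rho l a = a).

Lemma fixed_neq_moved : l != k.
Proof. by apply/eqP => e; apply: hba; rewrite -hka -e. Qed.

Lemma root_comb2_bounds (p q : nat) : (0 < p)%N -> (0 < q)%N -> R a (comb2 k l p q) ->
  q%:Z <= - (p%:Z * C a l k) /\ p%:Z <= - (q%:Z * C a k l).
Proof.
move=> p_gt0 q_gt0 Rv; split.
  have := root_sigma l Rv; rewrite hla sigma_comb2_2 cartan_diag.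
  by move=> /(root_comb2_sign fixed_neq_moved); nia.
have := root_sigma k Rv; rewrite hka sigma_comb2_1 cartan_diag.
by move=> /(root_comb2_sign fixed_neq_moved); nia.
Qed.

Lemma orthogonal_fixes : C a k l = 0 -> rho l b = b.
Proof.
move=> ckl0; have hkl : k != l by rewrite eq_sym fixed_neq_moved.
have card2 : has_card (fun x => R a x /\ in_cone2 k l x) 2.
  apply: (@cone2_card a k l [::] fixed_neq_moved) => // p q p_gt0 q_gt0 Rv.
  by have [_] := root_comb2_bounds p_gt0 q_gt0 Rv; rewrite ckl0; lia.
have /= := rho_braid hkl card2; rewrite hla hka => e.
by rewrite -[RHS]hka -e rhoK.
Qed.

Lemma simply_laced_braid : C a k l = -1 -> C a l k = -1 -> rho k (rho l b) = rho l b.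
Proof.
move=> ckl clk; have hkl : k != l by rewrite eq_sym fixed_neq_moved.
have root11 : R a (comb2 k l 1 1).
  have := root_sigma l (root_alpha a k); rewrite hla -(comb2_10 k l) sigma_comb2_2 clk.
  by congr (R a (comb2 _ _ _ _)); ring.
have card3 : has_card (fun x => R a x /\ in_cone2 k l x) 3.
  apply: (@cone2_card a k l [:: (1, 1)]%N fixed_neq_moved) => //.
    by move=> pq; rewrite inE => /eqP ->.
  move=> p q p_gt0 q_gt0 Rv; have [] := root_comb2_bounds p_gt0 q_gt0 Rv.
  rewrite ckl clk => q_le p_le; have epq : p = q by lia.
  subst q; have := root_sigma k Rv; rewrite hka sigma_comb2_1 cartan_diag ckl.
  have -> : p%:Z - (p%:Z * 2 + p%:Z * -1) = 0%N by ring.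
  by case/root_comb2_axis => /(_ erefl) ->.
have /= := rho_braid hkl card3; rewrite hla hka => e.
have e' : rho l (rho k (rho l b)) = b by rewrite -[RHS]hka -e rhoK.
by rewrite -{2}e' rhoK.
Qed.

Lemma orthogonal_cartan_row_eq : C a k l = 0 -> forall n, C a l n = C b l n.
Proof.
move=> ckl0 n; have hlb := orthogonal_fixes ckl0.
have hkb : rho k b = a by rewrite -hka rhoK.
have cbk x : C b k x = C a k x by rewrite -hka cartan_rho.
have cblk : C b l k = 0 by apply/eqP; rewrite cartan_eq0_sym cbk ckl0.
have [->|hnl] := eqVneq n l; first by rewrite !cartan_diag.
pose u v := sigma C k b (sigma C l b (sigma C k a (sigma C l a v))).
have Ru v : R a v -> R a (u v).
  move=> /(root_sigma l); rewrite hla => /(root_sigma k); rewrite hka.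
  by move=> /(root_sigma l); rewrite hlb => /(root_sigma k); rewrite hkb.
pose d := C a l n - C b l n.
have u_comb c : u (comb2 n l 1 c) = comb2 n l 1 (c + d).
  apply/ffunP => t; rewrite !sigmaE !cartan_form_sigma !cartan_form_comb2 !ffunE.
  by rewrite !cbk ckl0 cblk !cartan_diag /d; ring.
have root_f m : R a (comb2 n l 1 (m%:Z * d)).
  elim: m => [|m IH]; first by rewrite mul0r comb2_10; apply: root_alpha.
  have -> : m.+1%:Z * d = m%:Z * d + d by rewrite intS; ring.
  by rewrite -u_comb; apply: Ru.
apply/eqP; rewrite -subr_eq0 -/d; apply: contraT => d_neq0; exfalso.
have hln : l != n by rewrite eq_sym.
apply: (root_seq_not_injective root_f) => m m' /(congr1 (fun v : vecZ I => v l)).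
by rewrite !comb2_2 // => /(mulIf d_neq0) /eqP; rewrite eqz_nat => /eqP.
Qed.

End RankTwo.

Section Twist.
Variables (a b : A) (i j l : I).
Hypotheses (hia : rho i a = b) (hja : rho j a = b) (hba : b <> a) (hla : rho l a = a).

Let twist v := sigma C j b (sigma C i a (sigma C l a v)).

Lemma root_twist v : R a v -> R a (twist v).
Proof.
move=> /(root_sigma l); rewrite hla => /(root_sigma i); rewrite hia.
by move=> /(root_sigma j); rewrite -{1}hja rhoK.
Qed.

Lemma twist_comb3 x y z :
  let z' := z - (x * C a l i + y * C a l j + z * 2) in
  let x' := x - (x * 2 + y * C a i j + z' * C a i l) in
  twist (comb3 i j l x y z) =
  comb3 i j l x' (y - (x' * C a j i + y * 2 + z' * C a j l)) z'.
Proof.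
by rewrite /twist /= sigma_comb3_3 sigma_comb3_1 sigma_comb3_2 -hja !cartan_rho !cartan_diag.
Qed.

Lemma twist_orbit_bounded (Q : int -> int -> int -> Prop) : Q 0 0 (-1) ->
  ~ (forall x y z x' y' z', Q x y z ->
       z' = z - (x * C a l i + y * C a l j + z * 2) ->
       x' = x - (x * 2 + y * C a i j + z' * C a i l) ->
       y' = y - (x' * C a j i + y * 2 + z' * C a j l) ->
       Q x' y' z' /\ z < z').
Proof.
move=> Q0 Qstep; have hli := fixed_neq_moved hia hba hla.
have hlj := fixed_neq_moved hja hba hla.
pose P v := exists x y z, v = comb3 i j l x y z /\ Q x y z.
apply: (@root_orbit_bounded a twist l P _ root_twist); last by exists 0, 0, (-1).
- move=> _ [x [y [z [-> Qxyz]]]]; rewrite twist_comb3 /=.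
  have [Q' lt] := Qstep x y z _ _ _ Qxyz erefl erefl erefl.
  by split; [do 3 eexists; split; first reflexivity | rewrite !comb3_3].
- by rewrite comb3_00N1; apply/root_neg/root_alpha.
Qed.

Lemma cartan_triangle_free : i != j -> C a i j * C a i l * C a j l = 0.
Proof.
move=> hij.
have hil : i != l by rewrite eq_sym (fixed_neq_moved hia hba hla).
have hjl : j != l by rewrite eq_sym (fixed_neq_moved hja hba hla).
apply/eqP; apply: contraT; rewrite !mulf_eq0 !negb_or => /andP [/andP [cij0 cil0] cjl0].
have [cij cji] := cartan_neq0_le hij cij0.
have [cil cli] := cartan_neq0_le hil cil0.
have [cjl clj] := cartan_neq0_le hjl cjl0.
exfalso; apply: (twist_orbit_bounded (Q := fun x y z => [/\ z <= x, x <= y, 0 <= x & z < y])) => //.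
move=> x y z x' y' z' [zx xy x0 zy] ez ex ey.
have z'_ge : x + y - z <= z' by nia.
have x'_ge : y + z' - x <= x' by nia.
have y'_ge : x' + z' - y <= y' by nia.
by split; first split; lia.
Qed.

Lemma fan_simply_laced : C a i j = 0 -> C a i l != 0 -> C a j l != 0 ->
  (C a i l = -1 /\ C a l i = -1) \/ (C a j l = -1 /\ C a l j = -1).
Proof.
move=> cij0 cil0 cjl0.
have hil : i != l by rewrite eq_sym (fixed_neq_moved hia hba hla).
have hjl : j != l by rewrite eq_sym (fixed_neq_moved hja hba hla).
have [cil cli] := cartan_neq0_le hil cil0.
have [cjl clj] := cartan_neq0_le hjl cjl0.
have cji0 : C a j i = 0 by apply/eqP; rewrite cartan_eq0_sym cij0.
set K := C a i l * C a l i + C a j l * C a l j.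
have [K_lt4|K_ge4] := ltrP K 4; first by nia.
exfalso; pose f x y := - (x * C a l i + y * C a l j).
apply: (twist_orbit_bounded (Q := fun x y z => -1 <= z /\ 2 * z < f x y)).
  by rewrite /f; lia.
move=> x y z x' y' z' [z_ge z_lt] ez ex ey.
have ez' : z' = f x y - z by rewrite ez /f; ring.
have ef : f x' y' = K * z' - f x y by rewrite ey ex cij0 cji0 /f /K ez'; ring.
by rewrite ef; nia.
Qed.

End Twist.

End RootSystem.

Unset Implicit Arguments.

Theorem lemma4p10 (I : finType) (A : Type) (rho : I -> A -> A)
    (C : A -> I -> I -> int) (R : A -> vecZ I -> Prop)
    (hC : cartan_scheme rho C) (hconn : connected_scheme rho)
    (hR : root_system rho C R) (hfin : finite_root_system R)
    (a b : A) (i j l : I)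
    (hij : i != j) (hia : rho i a = b) (hja : rho j a = b) (hba : b <> a)
    (hla : rho l a = a) :
  C a i j * C a i l * C a j l = 0 /\
  (rho i (rho l b) <> rho l b -> rho j (rho l b) <> rho l b ->
   forall n : I, C a l n = C b l n).
Proof.
have triangle := cartan_triangle_free hC hR hfin hia hja hba hla hij.
split=> // hilb hjlb n.
have [cil0|cil0] := eqVneq (C a i l) 0.
  exact: (orthogonal_cartan_row_eq hC hR hfin hia hba hla cil0 n).
have [cjl0|cjl0] := eqVneq (C a j l) 0.
  exact: (orthogonal_cartan_row_eq hC hR hfin hja hba hla cjl0 n).
have cij0 : C a i j = 0.
  by move/eqP: triangle; rewrite !mulf_eq0 (negbTE cil0) (negbTE cjl0) !orbF => /eqP.
have [[cil cli]|[cjl clj]] := fan_simply_laced hC hR hfin hia hja hba hla cij0 cil0 cjl0.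
- by case: hilb; exact: (simply_laced_braid hC hR hia hba hla cil cli).
- by case: hjlb; exact: (simply_laced_braid hC hR hja hba hla cjl clj).
Qed.
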